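(* Let $G$ be a signed cyclic graph and let $D_G$ be a virtual link diagram associated with $G$. Then $D_G$ is checkerboard colorable.
   Context: A cyclic graph is a finite graph together with a cyclic ordering of the half-edges at each vertex (equivalently, a graph cellularly embedded in a closed orientable surface); a signed cyclic graph additionally has each edge labelled $+$ or $-$. Given a signed cyclic graph $G$, view it as cellularly embedded in a closed oriented surface and perform the medial construction: place a real crossing at the midpoint of each edge $e$ and join the crossings around each face, obtaining a link diagram on the surface; the crossing at $e$ is chosen so that, if $e$ is positive, its $B$-smoothing separates the two sides along $e$ (following the boundaries of the endpoints of $e$) and its $A$-smoothing connects across $e$; for a negative edge the roles of $A$ and $B$ are exchanged ($A$-, $B$-smoothings in Kauffman's standard sense). Immersing this surface diagram generically in the plane, marking artefacts of the immersion as virtual crossings, gives a virtual link diagram; any such diagram is called a virtual link diagram associated with $G$. A virtual link diagram is checkerboard colorable if one can color a small neighbourhood of one side of each arc so that near each real crossing the colored sides alternate around the crossing, and near each virtual crossing the colorings of the two strands pass through independently of each other. *)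

From mathcomp Require Import all_boot all_fingroup.
Set Implicit Arguments. Unset Strict Implicit. Unset Printing Implicit Defensive.
Local Open Scope group_scope.

(* Half-edges (darts) form a finite type D.  [alpha] is the fixed-point-free *)
(* involution pairing the two half-edges of an edge, [sigma] the permutation *)
(* giving the (counterclockwise) cyclic order of half-edges at each vertex   *)
(* (vertices = sigma-orbits), and [sgn d] is the sign of the edge of d       *)
(* (true = +, false = -), constant on edges.                                 *)
Definition signed_cyclic_graph (D : finType) (alpha : D -> D) (sigma : {perm D})
    (sgn : D -> bool) : Prop :=
  [/\ involutive alpha, (forall d, alpha d != d) & (forall d, sgn (alpha d) = sgn d)].

(* Link diagrams, recorded by their real crossings and arcs (virtual         *)
(* crossings are artefacts of the planar immersion and carry no data):       *)
(* H = half-arcs at real crossings; [lalpha] pairs the two ends of each arc; *)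
(* [lsigma] is the counterclockwise cyclic order of the four half-arcs at a  *)
(* crossing; [lover h] says whether h belongs to the over-strand.            *)
Record link_diagram := LinkDiagram {
  lH : finType;
  lalpha : lH -> lH;
  lsigma : lH -> lH;
  lover : lH -> bool
}.

(* Checkerboard colouring: for each half-arc h, [c h] records which side of  *)
(* the arc is coloured near the crossing: true = the corner (h, lsigma h),   *)
(* i.e. the left side of h travelling away from the crossing; false = the    *)
(* corner (lsigma^-1 h, h), the right side.  A colour choice is one side per *)
(* arc, so the two ends of an arc see opposite values (left/right flip when  *)
(* the direction is reversed); coloured sides alternate around each real     *)
(* crossing, which says exactly that consecutive half-arcs h, lsigma h have  *)
(* opposite values (both colour the corner between them, or neither does).   *)
(* Virtual crossings impose no condition (strands pass independently).       *)
Definition checkerboard_coloring (L : link_diagram) (c : lH L -> bool) : Prop :=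
  (forall h, c (lalpha h) = ~~ c h) /\ (forall h, c (lsigma h) = ~~ c h).

Definition checkerboard_colorable (L : link_diagram) : Prop :=
  exists c : lH L -> bool, checkerboard_coloring c.

(* Medial construction.  The crossing at edge e = {d, alpha d} has four      *)
(* half-arcs; (d, true) points into the corner (d, sigma d) and (d, false)   *)
(* into the corner (sigma^-1 d, d) at the tail vertex of d.  The arc through *)
(* the corner (d, sigma d) joins (d, true) to (sigma d, false).  Counter-     *)
(* clockwise around the crossing: (d,true),(d,false),(alpha d,true),         *)
(* (alpha d,false).  Strands: {(d,true),(alpha d,true)} and                  *)
(* {(d,false),(alpha d,false)}.  For a positive edge the A-regions           *)
(* (swept by turning the over-strand counterclockwise) are the vertex        *)
(* corners, so the A-smoothing connects across e and the B-smoothing         *)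
(* separates along e: the over-strand is the "true" strand; for a negative   *)
(* edge the roles are exchanged.                                             *)
Section Medial.
Variables (D : finType) (alpha : D -> D) (sigma : {perm D}) (sgn : D -> bool).

Definition medial_alpha (h : D * bool) : D * bool :=
  if h.2 then (sigma h.1, false) else ((sigma^-1) h.1, true).

Definition medial_sigma (h : D * bool) : D * bool :=
  if h.2 then (h.1, false) else (alpha h.1, true).

Definition medial_over (h : D * bool) : bool := h.2 == sgn h.1.

Definition medial_diagram : link_diagram :=
  @LinkDiagram (D * bool)%type medial_alpha medial_sigma medial_over.
End Medial.

From mathcomp Require Import all_boot all_fingroup.

(* The shaded regions are those of the vertices of the graph: the corner
   between the half-arcs (d, true) and (d, false) lies at the tail of d. *)
Definition vertex_shading (D : finType) (h : D * bool) : bool := h.2.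

Lemma vertex_shading_checkerboard (D : finType) (alpha : D -> D)
    (sigma : {perm D}) (sgn : D -> bool) :
  @checkerboard_coloring (medial_diagram alpha sigma sgn) (@vertex_shading D).
Proof. by split=> -[d []]. Qed.

Lemma medial_checkerboard_colorable (D : finType) (alpha : D -> D)
    (sigma : {perm D}) (sgn : D -> bool) :
  checkerboard_colorable (medial_diagram alpha sigma sgn).
Proof. by exists (@vertex_shading D); apply: vertex_shading_checkerboard. Qed.

(* Colourability ignores both the signs and the graph axioms. *)
Theorem lemma3p1 (D : finType) (alpha : D -> D) (sigma : {perm D}) (sgn : D -> bool) :
  signed_cyclic_graph alpha sigma sgn ->
  checkerboard_colorable (medial_diagram alpha sigma sgn).
Proof. by move=> _; apply: medial_checkerboard_colorable. Qed.
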